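(* Suppose $f$ and $g$ are coprime in $\mathbb{Q}[t]$. Then there exists a positive integer $\Lambda$ such that $n\mid\Lambda$ whenever $n$ is a positive integer with $n^{12}\mid\gcd(A(a,b)^3,B(a,b)^2)$ for some $(a,b)\in\mathcal{T}_{\upsilon,\tau}$.
   Context: Fix $\upsilon\in\{1,2\}$ and positive integers $m,\tau$ with $m=1$ or $\upsilon\tau=1$. Let $f,g\in\mathbb{Z}[t]$ with $4f^3+27g^2\ne0$, no common real root, and $\max\{\frac12\deg f,\frac13\deg g\}=\frac{2m}{\upsilon\tau}$. Let $\varsigma=2m$ if $\upsilon=1$, $\varsigma=1$ if $\upsilon=2$; $A(x,y)=y^{2\varsigma}f(x/y^\tau)$, $B(x,y)=y^{3\varsigma}g(x/y^\tau)\in\mathbb{Z}[x,y]$. $\mathcal{T}_{\upsilon,\tau}=\{(a,b)\in\mathbb{Z}^2\setminus\{(0,0)\}:p^{\upsilon\tau}\nmid\gcd(a,b^\tau)\text{ for every prime }p\}$. *)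

From HB Require Import structures.
From mathcomp Require Import all_boot all_order all_algebra.
From mathcomp Require Import Rstruct.
Set Implicit Arguments. Unset Strict Implicit. Unset Printing Implicit Defensive.
Import Order.TTheory GRing.Theory Num.Theory.
Local Open Scope ring_scope.

Definition varsigma (ups m : nat) : nat := if ups == 1%N then (2 * m)%N else 1%N.

(* A(x,y) = y^(2 s) f(x / y^tau) evaluated at integers (a,b):
   sum_i f_i a^i b^(2 s - tau i).  Under the degree hypothesis all exponents
   2 s - tau i (i < size f) are genuinely nonnegative. *)
Definition Aform (ups m tau : nat) (f : {poly int}) (a b : int) : int :=
  \sum_(i < size f) f`_i * a ^+ i * b ^+ (2 * varsigma ups m - tau * i)%N.

(* B(x,y) = y^(3 s) g(x / y^tau) *)
Definition Bform (ups m tau : nat) (g : {poly int}) (a b : int) : int :=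
  \sum_(i < size g) g`_i * a ^+ i * b ^+ (3 * varsigma ups m - tau * i)%N.

Definition inT (ups tau : nat) (a b : int) : Prop :=
  (a, b) <> (0, 0) /\
  forall p : nat, prime p -> ~~ (((p ^ (ups * tau))%N)%:Z %| gcdz a (b ^+ tau))%Z.

Definition degp (p : {poly int}) : nat := (size p).-1.

From HB Require Import structures.
From mathcomp Require Import all_boot all_order all_algebra.
From mathcomp Require Import Rstruct.
From mathcomp Require Import zify ring.
Set Implicit Arguments. Unset Strict Implicit. Unset Printing Implicit Defensive.
Import Order.TTheory GRing.Theory Num.Theory.
Local Open Scope ring_scope.

(* Bezout over Q, cleared of denominators and homogenised with weights (tau, 1), gives
   D y^N = U A(x,y) + V B(x,y) with U, V integers.  Let p^e || n, so that p^(4e) | A(a,b)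
   and p^(6e) | B(a,b).  If p^(tau v_p(b)) | a, membership in T forces v_p(b) < upsilon,
   so this common p-power scales out of (a,b) at the price of few powers of p, and the
   identity for a p-adic unit y gives e <= v_p(D).  Otherwise v_p(a) < upsilon tau.  Let
   c be the leading coefficient of whichever of f, g attains the degree bound.  If
   v_p(b^tau) > v_p(a) + v_p(c), the leading term of that form dominates p-adically and
   e <= v_p(c); if not, v_p(b) < 2 tau + v_p(c) and the identity gives
   e <= v_p(D) + N v_p(b).  Hence n divides |D| |c|^K for a suitable K. *)

Definition zlogn (p : nat) (x : int) : nat := logn p `|x|.

Lemma zlognM p x y : x != 0 -> y != 0 -> zlogn p (x * y) = (zlogn p x + zlogn p y)%N.
Proof. by move=> x0 y0; rewrite /zlogn abszM lognM // absz_gt0. Qed.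

Lemma zlognX p x k : zlogn p (x ^+ k) = (k * zlogn p x)%N.
Proof. by rewrite /zlogn abszX lognX. Qed.

Lemma pfactor_dvdz p k x : prime p -> x != 0 ->
  (p%:Z ^+ k %| x)%Z = (k <= zlogn p x)%N.
Proof. by move=> pp x0; rewrite dvdzE abszX pfactor_dvdn // absz_gt0. Qed.

Lemma zlogn_pfactor p k : prime p -> zlogn p (p%:Z ^+ k) = k.
Proof. by move=> pp; rewrite /zlogn abszX pfactorK. Qed.

Lemma dvdz_pfactorM_cancel p j e n (x : int) : (0 < p)%N -> (j + e <= n)%N ->
  (p%:Z ^+ n %| p%:Z ^+ j * x)%Z -> (p%:Z ^+ e %| x)%Z.
Proof.
move=> p_gt0 le_n dvd_n.
rewrite -(@dvdz_mul2l (p%:Z ^+ j)) ?expf_neq0 -?lt0n // -exprD.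
exact: dvdz_trans (dvdz_exp2l _ le_n) dvd_n.
Qed.

Lemma dvdz_pexp2r k (d x : int) : (0 < k)%N -> (d ^+ k %| x ^+ k)%Z = (d %| x)%Z.
Proof. by move=> k0; rewrite !dvdzE !abszX dvdn_pexp2r. Qed.

Lemma zlognDr p x y : prime p -> x != 0 -> (p%:Z ^+ (zlogn p x).+1 %| y)%Z ->
  x + y != 0 /\ zlogn p (x + y) = zlogn p x.
Proof.
move=> pp x0; set k := zlogn p x => dvd_y.
have ndvd_x : ~~ (p%:Z ^+ k.+1 %| x)%Z by rewrite pfactor_dvdz // ltnn.
have xy0 : x + y != 0.
  by apply: contraNneq ndvd_x => /(canRL (addrK y)); rewrite add0r => ->; rewrite rpredN.
split=> //; apply/eqP; rewrite eqn_leq leqNgt -!pfactor_dvdz //.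
apply/andP; split.
  by apply: contraNN ndvd_x => dvd_xy; rewrite -(addrK y x) rpredB.
apply: rpredD; first by rewrite pfactor_dvdz.
by apply: dvdz_trans dvd_y; apply: dvdz_exp2l.
Qed.

(* [homog tau k h x y] is [y ^ k * h (x / y ^ tau)]; since [k - tau * i] is truncated,
   this reading requires [tau * deg h <= k]. *)
Definition homog (tau k : nat) (h : {poly int}) (x y : int) : int :=
  \sum_(i < size h) h`_i * x ^+ i * y ^+ (k - tau * i).

Section Homogenization.
Variables (tau k : nat) (h : {poly int}).

Lemma leq_weight_coef (i : 'I_(size h)) :
  (tau * (size h).-1 <= k)%N -> (tau * i <= k)%N.
Proof.
move/(leq_trans _); apply; rewrite leq_mul2l -ltnS prednK ?ltn_ord ?orbT //.
exact: leq_trans (ltn_ord i).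
Qed.

Lemma homogE (x y : int) : y != 0 -> (tau * (size h).-1 <= k)%N ->
  (homog tau k h x y)%:~R = (y%:~R : rat) ^+ k * (map_poly intr h).[x%:~R / y%:~R ^+ tau].
Proof.
move=> y0 deg_h; rewrite horner_coef size_map_inj_poly //; last exact: intr_inj.
rewrite /homog rmorph_sum mulr_sumr; apply: eq_bigr => i _.
have yr0 : (y%:~R : rat) ^+ (tau * i) != 0 by rewrite expf_neq0 // intr_eq0.
rewrite coef_map /= !rmorphM !rmorphXn /= -{2}(subnK (leq_weight_coef i deg_h)).
rewrite exprD exprMn exprVn -exprM; move: yr0.
move: (y%:~R ^+ _ : rat) ((h`_i)%:~R : rat) (x%:~R ^+ i : rat) (y%:~R ^+ (k - _) : rat).
by move=> Y c X Z Y0; field.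
Qed.

Lemma homog_scale (lam x y : int) : (tau * (size h).-1 <= k)%N ->
  homog tau k h (lam ^+ tau * x) (lam * y) = lam ^+ k * homog tau k h x y.
Proof.
move=> deg_h; rewrite /homog mulr_sumr; apply: eq_bigr => i _.
rewrite !exprMn -exprM -{3}(subnK (leq_weight_coef i deg_h)) exprD mulnC.
ring.
Qed.

Lemma zlogn_homog_lead p (x y : int) : prime p -> x != 0 -> lead_coef h != 0 ->
  (p%:Z ^+ (zlogn p x + zlogn p (lead_coef h)).+1 %| y ^+ tau)%Z ->
  homog tau (tau * (size h).-1) h x y != 0 /\
  zlogn p (homog tau (tau * (size h).-1) h x y)
    = (zlogn p (lead_coef h) + (size h).-1 * zlogn p x)%N.
Proof.
have lead_dominates c al d i : (i < d)%N -> (c + d * al < i * al + (d - i) * (al + c).+1)%N.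
  move=> lt_id; have [j ->] : exists j, d = (i + j.+1)%N by exists (d - i.+1)%N; lia.
  by rewrite addKn; nia.
move=> pp x0 lc0; set c := zlogn p (lead_coef h); set al := zlogn p x => dvd_y.
have size_h : size h = (size h).-1.+1.
  by rewrite prednK // lt0n size_poly_eq0 -lead_coef_eq0.
set d := (size h).-1 in size_h *.
have -> : homog tau (tau * d) h x y
    = \sum_(i < d.+1) h`_i * x ^+ i * y ^+ (tau * d - tau * i) by rewrite /homog size_h.
rewrite big_ord_recr /= subnn expr0 mulr1 addrC.
have -> : h`_d = lead_coef h by rewrite lead_coefE.
have lead0 : lead_coef h * x ^+ d != 0 by rewrite mulf_neq0 // expf_neq0.
have v_lead : zlogn p (lead_coef h * x ^+ d) = (c + d * al)%N.
  by rewrite zlognM ?expf_neq0 // zlognX.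
rewrite -v_lead; apply: zlognDr => //; rewrite v_lead.
apply: rpred_sum => i _; rewrite -mulnBr exprM -mulrA /=.
have dvd_term :
    (p%:Z ^+ (i * al + (d - i) * (al + c).+1)%N %| x ^+ i * (y ^+ tau) ^+ (d - i)%N)%Z.
  rewrite exprD [(i * al)%N]mulnC [((d - i) * _)%N]mulnC !exprM.
  by apply: dvdz_mul; apply: dvdz_exp2r; rewrite // pfactor_dvdz.
exact/dvdz_mull/(dvdz_trans (dvdz_exp2l _ (lead_dominates _ _ _ _ (ltn_ord i))) dvd_term).
Qed.

End Homogenization.

Lemma coprimep_int_Bezout (f g : {poly int}) :
  coprimep (map_poly intr f : {poly rat}) (map_poly intr g) ->
  exists (D : int) (u v : {poly int}), D != 0 /\ u * f + v * g = D%:P.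
Proof.
case/Bezout_eq1_coprimepP => -[u0 v0] /= Bezout_rat.
have [u [cu cu0 eu]] := rat_poly_scale u0.
have [v [cv cv0 ev]] := rat_poly_scale v0.
rewrite {}eu {}ev in Bezout_rat.
exists (cu * cv), (cv *: u), (cu *: v); split; first by rewrite mulf_neq0.
apply: (@map_inj_poly _ rat intr) => //; first exact: intr_inj.
rewrite rmorphD !rmorphM /= !map_polyZ.
rewrite !map_polyC /= -[RHS]mulr1 -Bezout_rat -!mul_polyC.
have cur0 : (cu%:~R : rat) != 0 by rewrite intr_eq0.
have cvr0 : (cv%:~R : rat) != 0 by rewrite intr_eq0.
by rewrite mulrDr !mulrA -!polyCM mulfK // [_ * cv%:~R * _]mulrAC divff // mul1r.
Qed.

Lemma homog_Bezout tau kf kg (f g u v : {poly int}) (D : int) :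
  u * f + v * g = D%:P -> (tau * (size f).-1 <= kf)%N -> (tau * (size g).-1 <= kg)%N ->
  exists N, forall x y, y != 0 -> exists U V : int,
    D * y ^+ N = U * homog tau kf f x y + V * homog tau kg g x y.
Proof.
move=> Bezout deg_f deg_g; set N := (kf + kg + tau * (size u + size v))%N.
have deg_u : (tau * (size u).-1 <= N - kf)%N by rewrite /N; nia.
have deg_v : (tau * (size v).-1 <= N - kg)%N by rewrite /N; nia.
exists N => x y y0; exists (homog tau (N - kf) u x y), (homog tau (N - kg) v x y).
apply: (@intr_inj rat); rewrite intrD !intrM !homogE // rmorphXn /=.
rewrite mulrACA -exprD subnK; last by rewrite /N; lia.
rewrite [X in _ = _ + X]mulrACA -exprD subnK; last by rewrite /N; lia.
rewrite -mulrDr mulrC; congr (_ * _).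
have := congr1 (fun p => (map_poly intr p).[x%:~R / y%:~R ^+ tau] : rat) Bezout.
by rewrite /= rmorphD !rmorphM /= map_polyC hornerD !hornerM hornerC => <-.
Qed.

Lemma inT_zlogn ups tau p a b : inT ups tau a b -> prime p ->
  (a != 0) && (zlogn p a < ups * tau)%N || (b != 0) && (zlogn p b < ups)%N.
Proof.
case=> ab0 /(_ p) T_p pp; move: (T_p pp); rewrite -natz natrX natz dvdz_gcd negb_and.
have [a0 | a0] /= := eqVneq a 0.
  have b0 : b != 0 by apply/eqP => b0; apply: ab0; rewrite a0 b0.
  rewrite a0 dvdz0 /= b0 pfactor_dvdz ?expf_neq0 // zlognX -ltnNge mulnC.
  by rewrite ltn_mul2r => /andP[].
rewrite pfactor_dvdz // -ltnNge; case: (ltnP (zlogn p a)) => //= _.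
have [-> | b0] := eqVneq b 0.
  by case: (tau) => [|t]; rewrite ?muln0 ?expr0 ?dvd1z // exprS mul0r dvdz0.
rewrite pfactor_dvdz ?expf_neq0 // zlognX -ltnNge mulnC.
by rewrite ltn_mul2r => /andP[].
Qed.

Section DivisorBound.
Variables (ups tau s N k : nat) (f g h : {poly int}) (D : int).
Hypothesis tau_gt0 : (0 < tau)%N.
Hypothesis s_gt0 : (0 < s)%N.
Hypothesis ups_le2 : (ups <= 2)%N.
Hypothesis s_weight : forall al, (al < ups * tau)%N -> (s * al < 2 * tau)%N.
Hypothesis s_scale : forall be, (be < ups)%N -> (s * be <= 1)%N.
Hypothesis deg_f : (tau * (size f).-1 <= 2 * s)%N.
Hypothesis deg_g : (tau * (size g).-1 <= 3 * s)%N.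
Hypothesis tight : h = f /\ k = 4%N /\ (tau * (size f).-1 = 2 * s)%N
                \/ h = g /\ k = 6%N /\ (tau * (size g).-1 = 3 * s)%N.
Hypothesis D_neq0 : D != 0.
Hypothesis Bezout : forall x y, y != 0 -> exists U V : int,
  D * y ^+ N = U * homog tau (2 * s) f x y + V * homog tau (3 * s) g x y.

Local Notation A := (homog tau (2 * s) f).
Local Notation B := (homog tau (3 * s) g).

Lemma zlogn_le_Bezout p e x y : prime p -> y != 0 ->
  (p%:Z ^+ e %| A x y)%Z -> (p%:Z ^+ e %| B x y)%Z ->
  (e <= zlogn p D + N * zlogn p y)%N.
Proof.
move=> pp y0 dvdA dvdB; have [U [V DyN]] := Bezout x y0.
have DyN0 : D * y ^+ N != 0 by rewrite mulf_neq0 ?expf_neq0.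
have : (p%:Z ^+ e %| D * y ^+ N)%Z by rewrite DyN rpredD ?dvdz_mull.
by rewrite pfactor_dvdz // zlognM ?expf_neq0 // zlognX.
Qed.

Lemma zlogn_le_descale p e a b : prime p -> (0 < e)%N -> b != 0 -> (zlogn p b < ups)%N ->
  (p%:Z ^+ (tau * zlogn p b) %| a)%Z ->
  (p%:Z ^+ (4 * e) %| A a b)%Z -> (p%:Z ^+ (6 * e) %| B a b)%Z -> (e <= zlogn p D)%N.
Proof.
move=> pp e0 b0; move Ebe: (zlogn p b) => be be_lt dvd_a dvdA dvdB.
have p_gt0 := prime_gt0 pp.
have [a1 ea] : exists a1, a = (p%:Z ^+ be) ^+ tau * a1.
  by exists (a %/ (p%:Z ^+ be) ^+ tau)%Z; rewrite mulrC divzK // -exprM mulnC.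
have [b1 eb] : exists b1, b = p%:Z ^+ be * b1.
  by exists (b %/ p%:Z ^+ be)%Z; rewrite mulrC divzK // pfactor_dvdz // Ebe.
have b10 : b1 != 0 by apply: contraNneq b0 => b10; rewrite eb b10 mulr0.
have vb1 : zlogn p b1 = 0%N.
  move: Ebe; rewrite eb zlognM ?expf_neq0 -?lt0n // zlogn_pfactor //.
  by rewrite -[RHS]addn0 => /addnI.
have sbe := s_scale be_lt.
rewrite ea eb !homog_scale // -!exprM in dvdA dvdB.
have := zlogn_le_Bezout pp b10 (dvdz_pfactorM_cancel _ _ dvdA) (dvdz_pfactorM_cancel _ _ dvdB).
by rewrite vb1 muln0 addn0; apply=> //; clear -sbe e0; nia.
Qed.

Lemma lead_coef_tight_neq0 : lead_coef h != 0.
Proof.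
rewrite lead_coef_eq0; apply/eqP => h0.
by case: tight => -[eh [_]];
  rewrite -eh h0 size_poly0 muln0 => /esym/eqP; rewrite muln_eq0 (gtn_eqF s_gt0).
Qed.

Lemma dvdz_tight p e a b : (p%:Z ^+ (4 * e) %| A a b)%Z -> (p%:Z ^+ (6 * e) %| B a b)%Z ->
  (p%:Z ^+ (k * e) %| homog tau (tau * (size h).-1) h a b)%Z.
Proof. by case: tight => -[-> [-> ->]]. Qed.

Lemma weight_tight al : (al < ups * tau)%N -> ((size h).-1 * al < k)%N.
Proof. by move/s_weight; case: tight => -[-> [-> deg_h]]; clear -deg_h tau_gt0; nia. Qed.

Lemma zlogn_le_lead p e a b : prime p -> a != 0 -> (zlogn p a < ups * tau)%N ->
  (p%:Z ^+ (zlogn p a + zlogn p (lead_coef h)).+1 %| b ^+ tau)%Z ->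
  (p%:Z ^+ (4 * e) %| A a b)%Z -> (p%:Z ^+ (6 * e) %| B a b)%Z ->
  (e <= zlogn p (lead_coef h))%N.
Proof.
move=> pp a0 /weight_tight al_lt dvd_b dvdA dvdB; have := dvdz_tight dvdA dvdB.
have [H0 vH] := zlogn_homog_lead pp a0 lead_coef_tight_neq0 dvd_b.
rewrite pfactor_dvdz // vH.
move: (zlogn p _) ((size h).-1 * _)%N al_lt => c dal dal_lt ke_le.
rewrite leqNgt; apply/negP => lt_ce.
have := leq_mul (leqnn k) lt_ce; have := leq_pmull c (leq_ltn_trans (leq0n _) dal_lt).
by rewrite mulnS; clear -ke_le dal_lt; lia.
Qed.

Lemma zlogn_le_small_b p e a b : prime p -> b != 0 ->
  (zlogn p a < ups * tau)%N -> (zlogn p a < tau * zlogn p b)%N ->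
  (tau * zlogn p b <= zlogn p a + zlogn p (lead_coef h))%N ->
  (p%:Z ^+ (4 * e) %| A a b)%Z -> (p%:Z ^+ (6 * e) %| B a b)%Z ->
  (e <= zlogn p D + N * (2 * tau + 1) * zlogn p (lead_coef h))%N.
Proof.
move=> pp b0 al_lt al_lt_be be_le dvdA dvdB.
have dvdA' : (p%:Z ^+ e %| A a b)%Z by apply: dvdz_trans dvdA; rewrite dvdz_exp2l // leq_pmull.
have dvdB' : (p%:Z ^+ e %| B a b)%Z by apply: dvdz_trans dvdB; rewrite dvdz_exp2l // leq_pmull.
apply: leq_trans (zlogn_le_Bezout pp b0 dvdA' dvdB') _.
rewrite leq_add2l -mulnA leq_mul2l; apply/orP; right.
move: (zlogn p a) (zlogn p b) (zlogn p (lead_coef h)) al_lt al_lt_be be_le.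
move=> al be c al_lt al_lt_be be_le.
have c_gt0 : (0 < c)%N by clear -al_lt_be be_le; lia.
have := leq_pmull be tau_gt0; have := leq_pmulr (2 * tau) c_gt0.
have := leq_mul ups_le2 (leqnn tau).
by clear -al_lt al_lt_be be_le; lia.
Qed.

Lemma zlogn_le_bound p e a b : prime p -> (0 < e)%N -> inT ups tau a b ->
  (p%:Z ^+ (4 * e) %| A a b)%Z -> (p%:Z ^+ (6 * e) %| B a b)%Z ->
  (e <= zlogn p D + (N * (2 * tau + 1)).+1 * zlogn p (lead_coef h))%N.
Proof.
move=> pp e0 /inT_zlogn/(_ pp) T_p dvdA dvdB.
case: (boolP ((b != 0) && (p%:Z ^+ (tau * zlogn p b) %| a)%Z)) => [/andP[b0 dvd_a] | not_scaled].
  have be_lt : (zlogn p b < ups)%N.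
    case/orP: T_p => /andP[a0 al_lt] //; move: dvd_a; rewrite pfactor_dvdz // => be_le.
    by rewrite -(ltn_pmul2l tau_gt0) [(tau * ups)%N]mulnC (leq_ltn_trans be_le).
  exact: leq_trans (zlogn_le_descale pp e0 b0 be_lt dvd_a dvdA dvdB) (leq_addr _ _).
have [a0 al_lt] : a != 0 /\ (zlogn p a < ups * tau)%N.
  case/orP: T_p => [/andP[]// | /andP[b0 be_lt]]; move: not_scaled; rewrite b0 /=.
  have [-> | a0] := eqVneq a 0; first by rewrite dvdz0.
  rewrite pfactor_dvdz // -ltnNge => al_lt_be; split=> //.
  by rewrite (leq_trans al_lt_be) // mulnC leq_mul2r ltnW ?orbT.
case: (boolP (p%:Z ^+ (zlogn p a + zlogn p (lead_coef h)).+1 %| b ^+ tau)%Z) => [dvd_b | far].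
  apply: leq_trans (zlogn_le_lead pp a0 al_lt dvd_b dvdA dvdB) _.
  exact: leq_trans (leq_pmull _ (ltn0Sn _)) (leq_addl _ _).
have b0 : b != 0 by apply: contraNneq far => ->; rewrite expr0n gtn_eqF ?dvdz0.
move: not_scaled far; rewrite b0 pfactor_dvdz // pfactor_dvdz ?expf_neq0 // zlognX.
rewrite -!ltnNge ltnS => al_lt_be be_le.
apply: leq_trans (zlogn_le_small_b pp b0 al_lt al_lt_be be_le dvdA dvdB) _.
by rewrite leq_add2l leq_mul2r leqnSn orbT.
Qed.

Lemma bound_gt0 : (0 < `|D| * `|lead_coef h| ^ (N * (2 * tau + 1)).+1)%N.
Proof. by rewrite muln_gt0 expn_gt0 !absz_gt0 D_neq0 lead_coef_tight_neq0. Qed.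

Lemma dvdn_bound n a b : (0 < n)%N -> inT ups tau a b ->
  ((n ^ 12)%N%:Z %| gcdz (A a b ^+ 3) (B a b ^+ 2))%Z ->
  (n %| `|D| * `|lead_coef h| ^ (N * (2 * tau + 1)).+1)%N.
Proof.
move=> n_gt0 T; rewrite dvdz_gcd => /andP[dvdA3 dvdB2].
apply/dvdn_partP => // p; rewrite mem_primes => /and3P[pp _ p_dvd_n].
have e_gt0 : (0 < logn p n)%N by rewrite logn_gt0 mem_primes pp n_gt0.
have pe_n12 : (p%:Z ^+ (12 * logn p n) %| (n ^ 12)%N%:Z)%Z.
  by rewrite -natz natrX natz mulnC exprM dvdz_exp2r // dvdzE abszX pfactor_dvdnn.
rewrite p_part pfactor_dvdn ?bound_gt0 // lognM ?expn_gt0 ?absz_gt0 ?lead_coef_tight_neq0 //.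
rewrite lognX; apply: zlogn_le_bound pp e_gt0 T _ _.
  rewrite -(dvdz_pexp2r _ _ (isT : 0 < 3)%N) -exprM mulnAC.
  exact: dvdz_trans pe_n12 dvdA3.
rewrite -(dvdz_pexp2r _ _ (isT : 0 < 2)%N) -exprM mulnAC.
exact: dvdz_trans pe_n12 dvdB2.
Qed.

End DivisorBound.

Lemma varsigma_spec ups m tau : (ups = 1 \/ ups = 2)%N -> (0 < m)%N ->
  (m = 1 \/ ups * tau = 1)%N ->
  [/\ (ups * varsigma ups m = 2 * m)%N, (0 < varsigma ups m)%N,
      forall al, (al < ups * tau)%N -> (varsigma ups m * al < 2 * tau)%N
    & forall be, (be < ups)%N -> (varsigma ups m * be <= 1)%N].
Proof.
by rewrite /varsigma; case=> -> /= m_gt0 m_or; split=> [|| al | be]; lia.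
Qed.

Lemma max_ratio_nat (x y a d : nat) : (0 < d)%N ->
  Num.max (x%:R / 2 : rat) (y%:R / 3) = a%:R / d%:R ->
  [/\ (x * d <= a * 2)%N, (y * d <= a * 3)%N & (x * d = a * 2)%N \/ (y * d = a * 3)%N].
Proof.
move=> d_gt0 max_eq.
have le_frac u v : (0 < v)%N -> (u%:R / v%:R <= a%:R / d%:R :> rat) = (u * d <= a * v)%N.
  by move=> v_gt0; rewrite ler_pdivrMr ?ltr0n // mulrAC ler_pdivlMr ?ltr0n // -!natrM ler_nat.
have eq_frac u v : (0 < v)%N -> (u%:R / v%:R = a%:R / d%:R :> rat) -> (u * d = a * v)%N.
  by move=> v_gt0 /eqP; rewrite eqr_div ?pnatr_eq0 -?lt0n // -!natrM eqr_nat => /eqP.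
split; [by rewrite -le_frac // -max_eq le_max lexx | | ].
  by rewrite -le_frac // -max_eq le_max lexx orbT.
have [lt_xy | le_yx] := leP (x%:R / 2 : rat) (y%:R / 3).
  by right; apply: eq_frac => //; rewrite -max_eq max_r.
by left; apply: eq_frac => //; rewrite -max_eq max_l // ltW.
Qed.

Lemma degree_weights ups m tau df dg : (ups = 1 \/ ups = 2)%N -> (0 < m)%N -> (0 < tau)%N ->
  (m = 1 \/ ups * tau = 1)%N ->
  Num.max (df%:R / 2 : rat) (dg%:R / 3) = (2 * m)%:R / (ups * tau)%:R ->
  [/\ (tau * df <= 2 * varsigma ups m)%N, (tau * dg <= 3 * varsigma ups m)%N
    & (tau * df = 2 * varsigma ups m)%N \/ (tau * dg = 3 * varsigma ups m)%N].
Proof.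
move=> ups12 m_gt0 tau_gt0 m_or max_eq.
have [ups_s _ _ _] := varsigma_spec ups12 m_gt0 m_or.
have ut_gt0 : (0 < ups * tau)%N by case: ups12 => ->; rewrite ?mul1n ?muln_gt0.
have := max_ratio_nat ut_gt0 max_eq; rewrite -ups_s.
move: (varsigma ups m) => s [le_f le_g tight]; clear -ups12 le_f le_g tight.
by case: ups12 => ups_eq; subst ups; split; lia.
Qed.

Theorem lemma2p7 (ups m tau : nat) (f g : {poly int}) :
  (ups = 1%N \/ ups = 2%N) -> (0 < m)%N -> (0 < tau)%N ->
  (m = 1%N \/ (ups * tau = 1)%N) ->
  4%:P * f ^+ 3 + 27%:P * g ^+ 2 != 0 ->
  ~ (exists x : Rdefinitions.R, (map_poly intr f).[x] = 0 /\ (map_poly intr g).[x] = 0) ->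
  Num.max ((degp f)%:R / 2 : rat) ((degp g)%:R / 3) = (2 * m)%:R / (ups * tau)%:R ->
  coprimep (map_poly intr f : {poly rat}) (map_poly intr g) ->
  exists Lambda : nat, (0 < Lambda)%N /\
    forall n : nat, (0 < n)%N ->
      (exists a b : int, inT ups tau a b /\
         ((n ^ 12)%N%:Z %| gcdz (Aform ups m tau f a b ^+ 3) (Bform ups m tau g a b ^+ 2))%Z) ->
      (n %| Lambda)%N.
Proof.
move=> ups12 m_gt0 tau_gt0 m_or _ _ max_eq coprime_fg.
have [_ s_gt0 s_weight s_scale] := varsigma_spec ups12 m_gt0 m_or.
have [deg_f deg_g tight] := degree_weights ups12 m_gt0 tau_gt0 m_or max_eq.
have ups_le2 : (ups <= 2)%N by case: ups12 => ->.
have [D [u [v [D_neq0 Bezout]]]] := coprimep_int_Bezout coprime_fg.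
have [N hom_Bezout] := homog_Bezout Bezout deg_f deg_g.
have [h [k tight_hk]] : exists h k,
    h = f /\ k = 4%N /\ (tau * (size f).-1 = 2 * varsigma ups m)%N
    \/ h = g /\ k = 6%N /\ (tau * (size g).-1 = 3 * varsigma ups m)%N.
  by case: tight => [tf | tg]; [exists f, 4%N; left | exists g, 6%N; right].
exists (`|D| * `|lead_coef h| ^ (N * (2 * tau + 1)).+1)%N; split.
  exact: bound_gt0 s_gt0 tight_hk D_neq0.
move=> n n_gt0 [a [b [T dvd_n]]]; move: n_gt0 T dvd_n.
by apply: (dvdn_bound (k := k)) => //.
Qed.
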